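(* Let $[a,b]$ be an interval of length $\ell=b-a+1$ on which the offline optimal takes the form of Structure 1 or Structure 2, and assume $\bar y_{a\to b}:=\frac1\ell\sum_{j=a}^b y_j\in[-B,B]$. Then the predictions $x_j$ of FLH-OGD satisfy $$\sum_{j=a}^b (y_j-x_j)^2-(y_j-u_j)^2\le 10(B+G)^2\log n-\frac{4\lambda^2}{\ell}.$$
   Context: Squared loss game: $n\ge 3$, $B\ge 1$, $G\ge B$; for $t=1,\dots,n$ the learner predicts $x_t\in[-B,B]$, then the adversary reveals $y_t\in[-G,G]$. $[a,b]=\{a,\dots,b\}$. FLH-OGD: For each $j\in[n]$ a base learner $E^j$ is started at time $j$; it runs projected online gradient descent on $[-B,B]$ on the losses $x\mapsto (y_t-x)^2$, $t\ge j$: its first prediction $x^{(j)}_j$ is a fixed point of $[-B,B]$, and $x^{(j)}_{t+1}=\Pi\big(x^{(j)}_t-\tfrac{1}{2\tau}\cdot 2(x^{(j)}_t-y_t)\big)$ with $\tau=t-j+1$, $\Pi$ the projection onto $[-B,B]$. The FLH meta-algorithm with learning rate $\zeta$ keeps a probability vector $v_t=(v_t^{(1)},\dots,v_t^{(t)})$, $v_1=(1)$; it predicts $x_t=\sum_{j\le t}v_t^{(j)}x^{(j)}_t$; after $y_t$ is revealed it sets $\hat v^{(i)}_{t+1}=v_t^{(i)}e^{-\zeta(y_t-x_t^{(i)})^2}/\sum_{j\le t}v_t^{(j)}e^{-\zeta(y_t-x_t^{(j)})^2}$ for $i\le t$, then $v^{(t+1)}_{t+1}=1/(t+1)$ and $v^{(i)}_{t+1}=(1-\tfrac1{t+1})\hat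 v^{(i)}_{t+1}$. FLH-OGD uses $\zeta=1/(2(G+B)^2)$. Offline optimal: given $C_n>0$, $u_1,\dots,u_n$ is an optimal solution of: minimize $\frac12\sum_{t=1}^n(y_t-\tilde u_t)^2$ subject to $\sum_{t=2}^{n}|\tilde u_t-\tilde u_{t-1}|\le C_n$ and $-B\le\tilde u_t\le B$; with optimal dual variables $\lambda\ge0$ (TV constraint) and $\gamma^\pm_t\ge0$ (box constraints) satisfying the KKT conditions: there are $s_t\in[-1,1]$ with $s_t=\mathrm{sign}(u_{t+1}-u_t)$ whenever $u_{t+1}\ne u_t$, $s_0=s_n=0$, $u_t-y_t=\lambda(s_t-s_{t-1})+\gamma_t^--\gamma_t^+$, and $\lambda(\sum_{t=2}^n|u_t-u_{t-1}|-C_n)=0$, $\gamma_t^-(u_t+B)=0$, $\gamma_t^+(u_t-B)=0$. Structure 1 on $[a,b]\subseteq\{2,\dots,n-1\}$: $u_j=u_a\in(-B,B)$ for all $j\in[a,b]$, $u_b>u_{b+1}$ and $u_a>u_{a-1}$. Structure 2 on $[a,b]\subseteq\{2,\dots,n-1\}$: $u_j=u_a\in(-B,B)$ for all $j\in[a,b]$, $u_b<u_{b+1}$ and $u_a<u_{a-1}$. *)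

From Stdlib Require Import Reals Lra Lia List Bool.
Import ListNotations.
Open Scope R_scope.

(* sumR a b f = sum_{i=a}^{b} f i  (empty if b < a) *)
Definition sumR (a b : nat) (f : nat -> R) : R :=
  fold_right Rplus 0 (map f (seq a (S b - a))).

Definition proj (B z : R) : R := Rmax (- B) (Rmin B z).

(* Base learner E^j (projected OGD started at time j with first prediction
   init j).  base B y init j k = x^{(j)}_{j+k}; tau = k+1 at time t=j+k. *)
Fixpoint base (B : R) (y : nat -> R) (init : nat -> R) (j k : nat) : R :=
  match k with
  | O => init j
  | S k' =>
      let xp := base B y init j k' in
      proj B (xp - / (2 * INR (S k')) * (2 * (xp - y (j + k')%nat)))
  end.

Definition xb (B : R) (y init : nat -> R) (j t : nat) : R :=
  base B y init j (t - j).

(* FLH weights v_t^{(j)}, t >= 1, j in [1,t]; zero outside. *)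
Fixpoint flh_w (B zeta : R) (y init : nat -> R) (t : nat) : nat -> R :=
  match t with
  | O => fun _ => 0
  | S t' =>
      match t' with
      | O => fun j => if Nat.eqb j 1 then 1 else 0
      | S _ =>
          (* here t = t'+1 and t' >= 1; build v_{t'+1} from v_{t'} *)
          let v := flh_w B zeta y init t' in
          let Z := sumR 1 t'
                     (fun j => v j * exp (- zeta * (y t' - xb B y init j t') ^ 2)) in
          fun i =>
            if Nat.eqb i (S t') then / INR (S t')
            else if Nat.leb 1 i && Nat.leb i t' then
              (1 - / INR (S t')) *
              (v i * exp (- zeta * (y t' - xb B y init i t') ^ 2) / Z)
            else 0
      end
  end.

Definition flh_ogd (B G : R) (y init : nat -> R) (t : nat) : R :=
  let zeta := / (2 * (G + B) ^ 2) in
  sumR 1 t (fun j => flh_w B zeta y init t j * xb B y init j t).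

Definition TV (n : nat) (u : nat -> R) : R :=
  sumR 2 n (fun t => Rabs (u t - u (t - 1)%nat)).

Definition feasible (n : nat) (B Cn : R) (u : nat -> R) : Prop :=
  TV n u <= Cn /\ (forall t, (1 <= t <= n)%nat -> - B <= u t <= B).

Definition objective (n : nat) (y u : nat -> R) : R :=
  / 2 * sumR 1 n (fun t => (y t - u t) ^ 2).

Definition offline_optimal (n : nat) (B Cn : R) (y u : nat -> R) : Prop :=
  feasible n B Cn u /\
  forall w, feasible n B Cn w -> objective n y u <= objective n y w.

(* KKT conditions with dual variables lam (TV), gm/gp (box), and s_0..s_n *)
Definition KKT (n : nat) (B Cn : R) (y u : nat -> R)
    (lam : R) (gm gp s : nat -> R) : Prop :=
  0 <= lam /\
  (forall t, (1 <= t <= n)%nat -> 0 <= gm t /\ 0 <= gp t) /\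
  (forall t, (t <= n)%nat -> -1 <= s t <= 1) /\
  s 0%nat = 0 /\ s n = 0 /\
  (forall t, (1 <= t <= n - 1)%nat ->
     (u t < u (S t) -> s t = 1) /\ (u (S t) < u t -> s t = -1)) /\
  (forall t, (1 <= t <= n)%nat ->
     u t - y t = lam * (s t - s (t - 1)%nat) + gm t - gp t) /\
  lam * (TV n u - Cn) = 0 /\
  (forall t, (1 <= t <= n)%nat -> gm t * (u t + B) = 0 /\ gp t * (u t - B) = 0).

Definition structure1 (n : nat) (B : R) (u : nat -> R) (a b : nat) : Prop :=
  (2 <= a)%nat /\ (a <= b)%nat /\ (b <= n - 1)%nat /\
  (forall j, (a <= j <= b)%nat -> u j = u a) /\
  - B < u a < B /\ u (S b) < u b /\ u (a - 1)%nat < u a.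

Definition structure2 (n : nat) (B : R) (u : nat -> R) (a b : nat) : Prop :=
  (2 <= a)%nat /\ (a <= b)%nat /\ (b <= n - 1)%nat /\
  (forall j, (a <= j <= b)%nat -> u j = u a) /\
  - B < u a < B /\ u b < u (S b) /\ u a < u (a - 1)%nat.

(* On a Structure 1/2 segment, u is a constant u_a strictly inside the box, so the box
   multipliers vanish there and summing the KKT stationarity condition over [a,b]
   telescopes to l u_a - sum y_j = lam (s_b - s_(a-1)) = +-2 lam.  Hence the loss of u
   exceeds that of the segment mean ybar by exactly 4 lam^2 / l, and it remains to bound
   the regret of FLH-OGD against the fixed comparator ybar in [-B,B]: the squared loss is
   exp-concave with parameter zeta = 1/(2(G+B)^2), so FLH loses at most 2(G+B)^2 log n
   against the OGD expert started at a, and that expert (step sizes 1/(2 tau) on a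
   2-strongly convex loss) has regret at most (G+B)^2 (1 + log l). *)

From Stdlib Require Import Reals Lra Lia Psatz List Bool.
From Coquelicot Require Import Coquelicot.
Open Scope R_scope.

Definition lsum (l : list nat) (f : nat -> R) : R := fold_right Rplus 0 (map f l).

Lemma lsum_ext l f g : (forall i, In i l -> f i = g i) -> lsum l f = lsum l g.
Proof.
  unfold lsum; induction l as [|i l IH]; intros H; simpl; [reflexivity|].
  f_equal; [apply H; now left | apply IH; intros j Hj; apply H; now right].
Qed.

Lemma lsum_le l f g : (forall i, In i l -> f i <= g i) -> lsum l f <= lsum l g.
Proof.
  unfold lsum; induction l as [|i l IH]; intros H; simpl; [lra|].
  apply Rplus_le_compat; [apply H; now left | apply IH; intros j Hj; apply H; now right].
Qed.

Lemma lsum_plus l f g : lsum l (fun i => f i + g i) = lsum l f + lsum l g.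
Proof. unfold lsum; induction l; simpl; [ring|]. rewrite IHl. ring. Qed.

Lemma lsum_scal l c f : lsum l (fun i => c * f i) = c * lsum l f.
Proof. unfold lsum; induction l; simpl; [ring|]. rewrite IHl. ring. Qed.

Lemma lsum_const l c : lsum l (fun _ => c) = INR (length l) * c.
Proof.
  unfold lsum; induction l as [|i l IH]; [simpl; ring|].
  cbn [map fold_right length]. rewrite IH, S_INR. ring.
Qed.

Lemma lsum_nonneg l f : (forall i, In i l -> 0 <= f i) -> 0 <= lsum l f.
Proof.
  unfold lsum; induction l as [|i l IH]; intros H; simpl; [lra|].
  apply Rplus_le_le_0_compat; [apply H; now left | apply IH; intros j Hj; apply H; now right].
Qed.

Lemma lsum_term_le l f i : (forall j, In j l -> 0 <= f j) -> In i l -> f i <= lsum l f.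
Proof.
  induction l as [|j l IH]; intros H Hi; [contradiction|].
  assert (Hj : 0 <= f j) by (apply H; now left).
  assert (Htl : forall k, In k l -> 0 <= f k) by (intros k Hk; apply H; now right).
  unfold lsum; simpl; fold (lsum l f).
  destruct Hi as [<-|Hi].
  - assert (0 <= lsum l f) by (apply lsum_nonneg; exact Htl). lra.
  - assert (f i <= lsum l f) by (apply IH; assumption). lra.
Qed.

Lemma sumR_lsum a b f : sumR a b f = lsum (seq a (S b - a)) f.
Proof. reflexivity. Qed.

Lemma sumR_ext a b f g :
  (forall i, (a <= i <= b)%nat -> f i = g i) -> sumR a b f = sumR a b g.
Proof. intros H; apply lsum_ext; intros i Hi; apply in_seq in Hi; apply H; lia. Qed.

Lemma sumR_le a b f g :
  (forall i, (a <= i <= b)%nat -> f i <= g i) -> sumR a b f <= sumR a b g.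
Proof. intros H; apply lsum_le; intros i Hi; apply in_seq in Hi; apply H; lia. Qed.

Lemma sumR_plus a b f g : sumR a b (fun i => f i + g i) = sumR a b f + sumR a b g.
Proof. apply lsum_plus. Qed.

Lemma sumR_scal a b c f : sumR a b (fun i => c * f i) = c * sumR a b f.
Proof. apply lsum_scal. Qed.

Lemma sumR_minus a b f g : sumR a b (fun i => f i - g i) = sumR a b f - sumR a b g.
Proof.
  rewrite (sumR_ext a b _ (fun i => f i + (-1) * g i)) by (intros; ring).
  rewrite sumR_plus, sumR_scal. ring.
Qed.

Lemma sumR_const a b c : sumR a b (fun _ => c) = INR (S b - a) * c.
Proof. rewrite sumR_lsum, lsum_const, length_seq. reflexivity. Qed.

Lemma sumR_term_le a b f i :
  (forall j, (a <= j <= b)%nat -> 0 <= f j) -> (a <= i <= b)%nat -> f i <= sumR a b f.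
Proof.
  intros H Hi; apply lsum_term_le; [|apply in_seq; lia].
  intros j Hj; apply in_seq in Hj; apply H; lia.
Qed.

Lemma sumR_pos a b f i :
  (forall j, (a <= j <= b)%nat -> 0 <= f j) -> (a <= i <= b)%nat -> 0 < f i ->
  0 < sumR a b f.
Proof. intros H Hi Hfi. eapply Rlt_le_trans; [exact Hfi | apply sumR_term_le; auto]. Qed.

Lemma sumR_one a f : sumR a a f = f a.
Proof. unfold sumR. replace (S a - a)%nat with 1%nat by lia. simpl. ring. Qed.

Lemma sumR_S a b f : (a <= S b)%nat -> sumR a (S b) f = sumR a b f + f (S b).
Proof.
  intros H; rewrite !sumR_lsum.
  replace (S (S b) - a)%nat with (S (S b - a)) by lia.
  rewrite seq_S; replace (a + (S b - a))%nat with (S b) by lia.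
  unfold lsum; rewrite map_app, fold_right_app; cbn [map fold_right].
  induction (map f (seq a (S b - a))) as [|x l IH]; cbn [fold_right]; [ring|].
  rewrite IH; ring.
Qed.

Lemma sumR_telescope (s : nat -> R) a b : (1 <= a <= S b)%nat ->
  sumR a b (fun j => s j - s (j - 1)%nat) = s b - s (a - 1)%nat.
Proof.
  intros Ha; induction b as [|b IH].
  - replace a with 1%nat by lia. unfold sumR; simpl; ring.
  - destruct (Nat.eq_dec a (S (S b))) as [->|Hne].
    + unfold sumR; replace (S (S b) - S (S b))%nat with 0%nat by lia; simpl.
      replace (S b - 0)%nat with (S b) by lia. ring.
    + rewrite sumR_S, IH by lia. replace (S b - 1)%nat with b by lia. ring.
Qed.

Lemma sumR_convex_bounds a b (w x : nat -> R) lo hi :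
  (forall j, (a <= j <= b)%nat -> 0 <= w j) -> sumR a b w = 1 ->
  (forall j, (a <= j <= b)%nat -> lo <= x j <= hi) ->
  lo <= sumR a b (fun j => w j * x j) <= hi.
Proof.
  intros Hw Hsum Hx; split.
  - apply Rle_trans with (sumR a b (fun j => lo * w j)).
    + rewrite sumR_scal, Hsum; lra.
    + apply sumR_le; intros j Hj; specialize (Hw j Hj); specialize (Hx j Hj); nra.
  - apply Rle_trans with (sumR a b (fun j => hi * w j)).
    + apply sumR_le; intros j Hj; specialize (Hw j Hj); specialize (Hx j Hj); nra.
    + rewrite sumR_scal, Hsum; lra.
Qed.

Lemma antitone_of_deriv_nonpos (F F' : R -> R) (lo hi : R) :
  (forall c, derivable_pt_lim F c (F' c)) ->
  (forall c, lo <= c <= hi -> F' c <= 0) ->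
  forall c d, lo <= c -> c <= d -> d <= hi -> F d <= F c.
Proof.
  intros HD Hneg c d Hc Hcd Hd.
  destruct (Req_dec c d) as [<-|Hne]; [lra|].
  destruct (MVT_cor2 F F' c d ltac:(lra) (fun e _ => HD e)) as [e [E He]].
  assert (F' e * (d - c) <= 0) by (apply Rmult_le_0_r; [apply Hneg|]; lra).
  lra.
Qed.

Lemma tangent_le_of_deriv_antitone (F F' : R -> R) (x z : R) :
  (forall c, derivable_pt_lim F c (F' c)) ->
  (forall c d, Rmin x z <= c -> c <= d -> d <= Rmax x z -> F' d <= F' c) ->
  F z <= F x + F' x * (z - x).
Proof.
  intros HD Hanti.
  destruct (Rtotal_order x z) as [Hlt|[<-|Hgt]]; [| lra |].
  - destruct (MVT_cor2 F F' x z Hlt (fun c _ => HD c)) as [c [E Hc]].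
    rewrite Rmin_left, Rmax_right in Hanti by lra.
    assert (F' c <= F' x) by (apply Hanti; lra).
    assert ((F' x - F' c) * (z - x) >= 0) by (apply Rle_ge, Rmult_le_pos; lra).
    lra.
  - destruct (MVT_cor2 F F' z x Hgt (fun c _ => HD c)) as [c [E Hc]].
    rewrite Rmin_right, Rmax_left in Hanti by lra.
    assert (F' x <= F' c) by (apply Hanti; lra).
    assert ((F' c - F' x) * (x - z) >= 0) by (apply Rle_ge, Rmult_le_pos; lra).
    lra.
Qed.

Lemma exp_sq_loss_deriv zeta y c :
  derivable_pt_lim (fun w => exp (- zeta * (y - w) ^ 2)) c
    (2 * zeta * (y - c) * exp (- zeta * (y - c) ^ 2)).
Proof.
  apply is_derive_Reals; auto_derive; [exact I|].
  replace (- zeta * ((y + - c) * ((y + - c) * 1))) with (- zeta * (y - c) ^ 2) by ring.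
  ring.
Qed.

Lemma exp_sq_loss_deriv2 zeta y c :
  derivable_pt_lim (fun w => 2 * zeta * (y - w) * exp (- zeta * (y - w) ^ 2)) c
    (2 * zeta * exp (- zeta * (y - c) ^ 2) * (2 * zeta * (y - c) ^ 2 - 1)).
Proof.
  apply is_derive_Reals; auto_derive; [exact I|].
  replace (- zeta * ((y + - c) * ((y + - c) * 1))) with (- zeta * (y - c) ^ 2) by ring.
  ring.
Qed.

Lemma sq_dist_between_le zeta y p q c : 0 <= zeta ->
  2 * zeta * (y - p) ^ 2 <= 1 -> 2 * zeta * (y - q) ^ 2 <= 1 ->
  Rmin p q <= c <= Rmax p q -> 2 * zeta * (y - c) ^ 2 <= 1.
Proof.
  intros Hz Hp Hq Hc.
  assert (Hsq : (y - c) ^ 2 <= (y - p) ^ 2 \/ (y - c) ^ 2 <= (y - q) ^ 2).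
  { unfold Rmin, Rmax in Hc; destruct (Rle_dec p q), (Rle_dec 0 (y - c));
      [left|right|right|left]; nra. }
  destruct Hsq; nra.
Qed.

(* w |-> exp (- zeta (y - w)^2) is concave wherever 2 zeta (y - w)^2 <= 1. *)
Lemma exp_sq_loss_tangent zeta y x z : 0 < zeta ->
  2 * zeta * (y - x) ^ 2 <= 1 -> 2 * zeta * (y - z) ^ 2 <= 1 ->
  exp (- zeta * (y - z) ^ 2) <=
  exp (- zeta * (y - x) ^ 2) + 2 * zeta * (y - x) * exp (- zeta * (y - x) ^ 2) * (z - x).
Proof.
  intros Hz Hx Hzz.
  apply (tangent_le_of_deriv_antitone (fun w => exp (- zeta * (y - w) ^ 2))
           (fun w => 2 * zeta * (y - w) * exp (- zeta * (y - w) ^ 2))).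
  { apply exp_sq_loss_deriv. }
  apply (antitone_of_deriv_nonpos _ _ _ _ (exp_sq_loss_deriv2 zeta y)).
  intros c Hc.
  assert (Hzone := sq_dist_between_le zeta y x z c ltac:(lra) Hx Hzz Hc).
  assert (0 <= 2 * zeta * exp (- zeta * (y - c) ^ 2))
    by (assert (Hp := exp_pos (- zeta * (y - c) ^ 2)); nra).
  apply Rmult_le_0_l; lra.
Qed.

Lemma inv_succ_le_ln_diff m : 0 < m -> / (m + 1) <= ln (m + 1) - ln m.
Proof.
  intros Hm.
  assert (Hq : 0 < m / (m + 1)) by (apply Rdiv_lt_0_compat; lra).
  assert (Hln : ln (m / (m + 1)) = ln m - ln (m + 1))
    by (unfold Rdiv; rewrite ln_mult, ln_Rinv; [ring | lra | lra | apply Rinv_0_lt_compat; lra]).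
  (* ln u <= u - 1, from 1 + ln u <= exp (ln u) = u *)
  assert (Hu := exp_ineq1_le (ln (m / (m + 1)))). rewrite exp_ln in Hu by exact Hq.
  assert (m / (m + 1) = 1 - / (m + 1)) by (field; lra).
  lra.
Qed.

Section FLHWeights.
Variables (B zeta : R) (y init : nat -> R).
Local Notation v := (flh_w B zeta y init).

Definition flh_factor (t j : nat) : R := exp (- zeta * (y t - xb B y init j t) ^ 2).
Definition flh_norm (t : nat) : R := sumR 1 t (fun j => v t j * flh_factor t j).

Lemma flh_w_succ t i : (1 <= t)%nat ->
  v (S t) i =
  if Nat.eqb i (S t) then / INR (S t)
  else if Nat.leb 1 i && Nat.leb i t then (1 - / INR (S t)) * (v t i * flh_factor t i / flh_norm t)
  else 0.
Proof. intros Ht; destruct t; [lia | reflexivity]. Qed.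

Lemma flh_w_succ_in t i : (1 <= i <= t)%nat ->
  v (S t) i = (1 - / INR (S t)) * (v t i * flh_factor t i / flh_norm t).
Proof.
  intros Hi; rewrite flh_w_succ by lia.
  replace (Nat.eqb i (S t)) with false by (symmetry; apply Nat.eqb_neq; lia).
  replace (Nat.leb 1 i && Nat.leb i t)%bool with true
    by (symmetry; apply andb_true_intro; split; apply Nat.leb_le; lia).
  reflexivity.
Qed.

Lemma flh_w_succ_last t : (1 <= t)%nat -> v (S t) (S t) = / INR (S t).
Proof. intros Ht; rewrite flh_w_succ, Nat.eqb_refl by lia. reflexivity. Qed.

Lemma flh_w_out t i : (i < 1 \/ t < i)%nat -> v t i = 0.
Proof.
  intros Hi; destruct t as [|[|t]]; [reflexivity| |].
  - simpl; replace (Nat.eqb i 1) with false by (symmetry; apply Nat.eqb_neq; lia).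
    reflexivity.
  - rewrite flh_w_succ by lia.
    replace (Nat.eqb i (S (S t))) with false by (symmetry; apply Nat.eqb_neq; lia).
    replace (Nat.leb 1 i && Nat.leb i (S t))%bool with false; [reflexivity|].
    symmetry; apply andb_false_iff.
    destruct Hi; [left | right]; apply Nat.leb_gt; lia.
Qed.

Lemma flh_w_pos t i : (1 <= i <= t)%nat -> 0 < v t i.
Proof.
  revert i; induction t as [|t IH]; intros i Hi; [lia|].
  destruct (Nat.eq_dec t 0) as [->|Ht0].
  { replace i with 1%nat by lia. simpl; lra. }
  destruct (Nat.eq_dec i (S t)) as [->|Hne].
  { rewrite flh_w_succ_last by lia. apply Rinv_0_lt_compat, lt_0_INR; lia. }
  assert (Hnn : forall j, 0 <= v t j).
  { intros j; destruct (Nat.le_gt_cases 1 j), (Nat.le_gt_cases j t);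
      [left; apply IH; lia | rewrite flh_w_out by lia; lra ..]. }
  assert (HF : forall j, 0 < flh_factor t j) by (intros; apply exp_pos).
  assert (HZ : 0 < flh_norm t).
  { apply (sumR_pos _ _ _ 1); [| lia |].
    - intros j _; apply Rmult_le_pos; [apply Hnn | left; apply HF].
    - apply Rmult_lt_0_compat; [apply IH; lia | apply HF]. }
  assert (Hinv : / INR (S t) < 1).
  { rewrite <- Rinv_1; apply Rinv_lt_contravar; [rewrite Rmult_1_l; apply lt_0_INR; lia|].
    apply (lt_INR 1); lia. }
  rewrite flh_w_succ_in by lia.
  apply Rmult_lt_0_compat; [lra|].
  apply Rdiv_lt_0_compat; [apply Rmult_lt_0_compat; [apply IH; lia | apply HF] | exact HZ].
Qed.

Lemma flh_w_nonneg t i : 0 <= v t i.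
Proof.
  destruct (Nat.le_gt_cases 1 i), (Nat.le_gt_cases i t);
    [left; apply flh_w_pos; lia | rewrite flh_w_out by lia; lra ..].
Qed.

Lemma flh_norm_pos t : (1 <= t)%nat -> 0 < flh_norm t.
Proof.
  intros Ht; apply (sumR_pos _ _ _ 1); [| lia |].
  - intros j _; apply Rmult_le_pos; [apply flh_w_nonneg | left; apply exp_pos].
  - apply Rmult_lt_0_compat; [apply flh_w_pos; lia | apply exp_pos].
Qed.

Lemma flh_w_sum t : (1 <= t)%nat -> sumR 1 t (v t) = 1.
Proof.
  induction t as [|t IH]; intros Ht; [lia|].
  destruct (Nat.eq_dec t 0) as [->|Ht0]; [rewrite sumR_one; reflexivity|].
  assert (HZ := flh_norm_pos t ltac:(lia)).
  rewrite sumR_S, flh_w_succ_last by lia.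
  rewrite (sumR_ext 1 t _ (fun i => ((1 - / INR (S t)) / flh_norm t) * (v t i * flh_factor t i)))
    by (intros i Hi; rewrite flh_w_succ_in by lia; unfold Rdiv; ring).
  rewrite sumR_scal; fold (flh_norm t).
  field; split; [apply not_0_INR; lia | lra].
Qed.

Lemma flh_w_diag t : (1 <= t)%nat -> INR t * v t t = 1.
Proof.
  intros Ht; destruct t as [|[|t]]; [lia | simpl; ring |].
  rewrite flh_w_succ_last by lia. field. apply not_0_INR; lia.
Qed.
End FLHWeights.

Lemma proj_bounds B z : 0 <= B -> - B <= proj B z <= B.
Proof. intros; unfold proj, Rmax, Rmin; destruct (Rle_dec B z), (Rle_dec (- B) _); lra. Qed.

Lemma proj_sq_dist_le B z c : - B <= c <= B -> (proj B z - c) ^ 2 <= (z - c) ^ 2.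
Proof.
  intros; unfold proj, Rmax, Rmin.
  destruct (Rle_dec B z); [destruct (Rle_dec (- B) B) | destruct (Rle_dec (- B) z)]; nra.
Qed.

Lemma base_bounds B y init j k : 0 <= B -> - B <= init j <= B -> - B <= base B y init j k <= B.
Proof. intros; destruct k; simpl; [assumption | apply proj_bounds; assumption]. Qed.

Section FLHRegret.
Variables (B G : R) (y init : nat -> R) (n : nat).
Hypotheses (HB : 1 <= B) (HG : B <= G)
  (Hy : forall t, (1 <= t <= n)%nat -> - G <= y t <= G)
  (Hi : forall j, (1 <= j <= n)%nat -> - B <= init j <= B).
Local Notation zeta := (/ (2 * (G + B) ^ 2)).
Local Notation v := (flh_w B zeta y init).
Local Notation x := (flh_ogd B G y init).

Lemma zeta_pos : 0 < zeta.
Proof. apply Rinv_0_lt_compat. assert (0 < (G + B) ^ 2) by (apply pow_lt; lra). lra. Qed.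

Lemma zeta_exp_concave_zone d : - B - G <= d <= B + G -> 2 * zeta * d ^ 2 <= 1.
Proof.
  intros Hd; assert (0 < (G + B) ^ 2) by (apply pow_lt; lra).
  replace (2 * zeta * d ^ 2) with (d ^ 2 / (G + B) ^ 2) by (field; lra).
  apply Rmult_le_reg_r with ((G + B) ^ 2); [lra|].
  unfold Rdiv; rewrite Rmult_assoc, Rinv_l; nra.
Qed.

Lemma xb_bounds j t : (1 <= j <= n)%nat -> - B <= xb B y init j t <= B.
Proof. intros; apply base_bounds; [lra | apply Hi; assumption]. Qed.

Lemma flh_ogd_bounds t : (1 <= t <= n)%nat -> - B <= x t <= B.
Proof.
  intros Ht; apply sumR_convex_bounds;
    [intros; apply flh_w_nonneg | apply flh_w_sum; lia | intros j Hj; apply xb_bounds; lia].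
Qed.

(* Exp-concavity: the tangent bound at the averaged prediction x t, summed with the weights. *)
Lemma flh_norm_le t : (1 <= t <= n)%nat ->
  flh_norm B zeta y init t <= exp (- zeta * (y t - x t) ^ 2).
Proof.
  intros Ht.
  assert (Hx := flh_ogd_bounds t Ht); assert (Hyt := Hy t Ht).
  set (E := exp (- zeta * (y t - x t) ^ 2)).
  set (K := 2 * zeta * (y t - x t) * E).
  apply Rle_trans with
    (sumR 1 t (fun j => E * v t j + (K * (v t j * xb B y init j t) + (- K * x t) * v t j))).
  - apply sumR_le; intros j Hj; unfold flh_factor.
    assert (Hxj := xb_bounds j t ltac:(lia)).
    assert (H := exp_sq_loss_tangent zeta (y t) (x t) (xb B y init j t) zeta_pos
      (zeta_exp_concave_zone (y t - x t) ltac:(lra))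
      (zeta_exp_concave_zone (y t - xb B y init j t) ltac:(lra))).
    fold E K in H.
    assert (Hw := flh_w_nonneg B zeta y init t j).
    assert (v t j * exp (- zeta * (y t - xb B y init j t) ^ 2)
            <= v t j * (E + K * (xb B y init j t - x t))) by (apply Rmult_le_compat_l; lra).
    lra.
  - rewrite !sumR_plus, !sumR_scal, flh_w_sum by lia.
    change (sumR 1 t (fun j => v t j * xb B y init j t)) with (x t). lra.
Qed.

Lemma flh_w_regret_step a t : (1 <= a <= t)%nat -> (t <= n)%nat ->
  exp (zeta * ((y t - x t) ^ 2 - (y t - xb B y init a t) ^ 2)) * (INR t * v t a)
  <= INR (S t) * v (S t) a.
Proof.
  intros Ha Ht.
  assert (HZ := flh_norm_pos B zeta y init t ltac:(lia)).
  assert (HM := flh_norm_le t ltac:(lia)).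
  set (Z := flh_norm B zeta y init t) in *.
  rewrite flh_w_succ_in by lia; unfold flh_factor; fold Z.
  set (la := (y t - xb B y init a t) ^ 2); set (lx := (y t - x t) ^ 2) in *.
  assert (HE : exp (zeta * (lx - la)) * Z <= exp (- zeta * la)).
  { replace (exp (- zeta * la)) with (exp (zeta * (lx - la)) * exp (- zeta * lx))
      by (rewrite <- exp_plus; f_equal; ring).
    apply Rmult_le_compat_l; [left; apply exp_pos | exact HM]. }
  assert (Hw := flh_w_nonneg B zeta y init t a).
  assert (HI : INR (S t) * (1 - / INR (S t)) = INR t)
    by (rewrite S_INR; field; assert (0 <= INR t) by apply pos_INR; lra).
  replace (INR (S t) * ((1 - / INR (S t)) * (v t a * exp (- zeta * la) / Z)))
    with ((INR t * v t a) * (exp (- zeta * la) / Z)) by (rewrite <- HI; unfold Rdiv; ring).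
  rewrite Rmult_comm; apply Rmult_le_compat_l; [apply Rmult_le_pos; [apply pos_INR | exact Hw]|].
  apply Rmult_le_reg_r with Z; [lra|].
  unfold Rdiv; rewrite Rmult_assoc, Rinv_l; lra.
Qed.

(* t * v t a starts at 1 for t = a, gains a factor exp (zeta * regret_t) at each step,
   and stays below n since v t a <= 1. *)
Lemma flh_regret a b : (1 <= a <= b)%nat -> (b < n)%nat ->
  sumR a b (fun t => (y t - x t) ^ 2 - (y t - xb B y init a t) ^ 2)
  <= 2 * (G + B) ^ 2 * ln (INR n).
Proof.
  intros Hab Hbn.
  set (r := fun t => (y t - x t) ^ 2 - (y t - xb B y init a t) ^ 2).
  assert (Hgrow : forall t, (a <= t <= b)%nat ->
     exp (zeta * sumR a t r) <= INR (S t) * v (S t) a).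
  { intros t Ht; induction t as [|t IH]; [lia|].
    destruct (Nat.eq_dec a (S t)) as [<-|Hne].
    - rewrite sumR_one.
      assert (H := flh_w_regret_step a a ltac:(lia) ltac:(lia)).
      rewrite flh_w_diag in H by lia. unfold r; lra.
    - rewrite sumR_S, Rmult_plus_distr_l, exp_plus by lia.
      apply Rle_trans with (exp (zeta * r (S t)) * (INR (S t) * v (S t) a));
        [| apply flh_w_regret_step; lia].
      rewrite Rmult_comm; apply Rmult_le_compat_l; [left; apply exp_pos | apply IH; lia]. }
  assert (Hv : v (S b) a <= 1).
  { rewrite <- (flh_w_sum B zeta y init (S b)) by lia.
    apply sumR_term_le; [intros; apply flh_w_nonneg | lia]. }
  assert (HSb : 0 < INR (S b) <= INR n) by (split; [apply lt_0_INR | apply le_INR]; lia).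
  assert (Hexp : exp (zeta * sumR a b r) <= INR n).
  { apply Rle_trans with (INR (S b) * v (S b) a); [apply Hgrow; lia|].
    assert (INR (S b) * v (S b) a <= INR (S b) * 1) by (apply Rmult_le_compat_l; lra). lra. }
  assert (Hln : zeta * sumR a b r <= ln (INR n))
    by (rewrite <- (ln_exp (zeta * sumR a b r)); apply ln_le; [apply exp_pos | exact Hexp]).
  assert (0 < (G + B) ^ 2) by (apply pow_lt; lra).
  apply Rmult_le_reg_l with zeta; [apply zeta_pos|].
  replace (zeta * (2 * (G + B) ^ 2 * ln (INR n))) with (ln (INR n)) by (field; lra).
  exact Hln.
Qed.
End FLHRegret.

Section OGDRegret.
Variables (B L c : R) (y init : nat -> R) (a : nat).
Hypothesis (Hc : - B <= c <= B).
Local Notation x k := (base B y init a k).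

(* Telescoping potential K (x_k - c)^2 with K = k + 1; the projection onto [-B,B] can only
   decrease the distance to c. *)
Lemma ogd_step_regret k : (y (a + k)%nat - x k) ^ 2 <= L ^ 2 ->
  (y (a + k)%nat - x k) ^ 2 - (y (a + k)%nat - c) ^ 2 <=
  INR k * (x k - c) ^ 2 - INR (S k) * (x (S k) - c) ^ 2 + L ^ 2 / INR (S k).
Proof.
  intros HL.
  set (K := INR (S k)); set (yk := y (a + k)%nat).
  assert (HK : 0 < K) by (apply lt_0_INR; lia).
  assert (Hk : INR k = K - 1) by (unfold K; rewrite S_INR; ring).
  set (z := x k - / (2 * K) * (2 * (x k - yk))).
  assert (Hp : (x (S k) - c) ^ 2 <= (z - c) ^ 2) by exact (proj_sq_dist_le B z c Hc).
  assert (Hz : K * (z - c) ^ 2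
               = K * (x k - c) ^ 2 - 2 * (x k - c) * (x k - yk) + (yk - x k) ^ 2 / K)
    by (unfold z; field; lra).
  assert (Hgap : (yk - x k) ^ 2 / K <= L ^ 2 / K)
    by (unfold Rdiv; apply Rmult_le_compat_r; [left; apply Rinv_0_lt_compat; lra | exact HL]).
  rewrite Hk. nra.
Qed.

Lemma ogd_regret m : (forall k, (k <= m)%nat -> (y (a + k)%nat - x k) ^ 2 <= L ^ 2) ->
  sumR a (a + m) (fun t => (y t - xb B y init a t) ^ 2 - (y t - c) ^ 2)
  + INR (S m) * (x (S m) - c) ^ 2 <= L ^ 2 * (1 + ln (INR (S m))).
Proof.
  induction m as [|m IH]; intros HL.
  - rewrite Nat.add_0_r, sumR_one; unfold xb; rewrite Nat.sub_diag.
    assert (H := ogd_step_regret 0 (HL 0%nat (le_n _))); rewrite Nat.add_0_r in H.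
    simpl INR in *; rewrite ln_1; lra.
  - rewrite Nat.add_succ_r, sumR_S by lia.
    unfold xb at 2; replace (S (a + m) - a)%nat with (S m) by lia.
    assert (H := ogd_step_regret (S m) (HL (S m) (le_n _))); rewrite Nat.add_succ_r in H.
    assert (IH' := IH (fun k Hk => HL k ltac:(lia))).
    assert (Hl := inv_succ_le_ln_diff (INR (S m)) ltac:(apply lt_0_INR; lia)).
    rewrite <- S_INR in Hl.
    assert (L ^ 2 / INR (S (S m)) <= L ^ 2 * (ln (INR (S (S m))) - ln (INR (S m))))
      by (apply Rmult_le_compat_l; [apply pow2_ge_0 | exact Hl]).
    lra.
Qed.
End OGDRegret.

Lemma sq_dev_const_minus_mean a b (y : nat -> R) (c0 : R) : (a <= b)%nat ->
  let l := INR (S b - a) in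
  sumR a b (fun j => (y j - c0) ^ 2) - sumR a b (fun j => (y j - / l * sumR a b y) ^ 2)
  = (l * c0 - sumR a b y) ^ 2 / l.
Proof.
  intros Hab l.
  assert (Hl : 0 < l) by (apply lt_0_INR; lia).
  set (m := / l * sumR a b y).
  rewrite <- sumR_minus.
  rewrite (sumR_ext a b _ (fun j => (2 * (m - c0)) * y j + (- ((m - c0) * (c0 + m))) * 1))
    by (intros; ring).
  rewrite sumR_plus, !sumR_scal, sumR_const; fold l.
  replace (sumR a b y) with (l * m) by (unfold m; field; lra).
  field; lra.
Qed.

Lemma kkt_sum_on_constant_segment n B Cn y u lam gm gp s a b :
  KKT n B Cn y u lam gm gp s -> (1 <= a <= b)%nat -> (b <= n)%nat ->
  (forall j, (a <= j <= b)%nat -> u j = u a) -> - B < u a < B ->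
  sumR a b (fun j => u a - y j) = lam * (s b - s (a - 1)%nat).
Proof.
  intros (_ & _ & _ & _ & _ & _ & Hstat & _ & Hbox) Hab Hbn Hconst Hua.
  rewrite <- (sumR_telescope s a b), <- sumR_scal by lia.
  apply sumR_ext; intros j Hj.
  destruct (Hbox j ltac:(lia)) as [Hm Hp]; rewrite (Hconst j Hj) in Hm, Hp.
  assert (gm j = 0) by (destruct (Rmult_integral _ _ Hm); [assumption | lra]).
  assert (gp j = 0) by (destruct (Rmult_integral _ _ Hp); [assumption | lra]).
  rewrite <- (Hconst j Hj), (Hstat j ltac:(lia)). lra.
Qed.

(* On a Structure 1/2 segment, u jumps in the same direction at both ends,
   so the subgradient signs at the two ends are opposite. *)
Lemma structure_sign_gap n B Cn y u lam gm gp s a b :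
  KKT n B Cn y u lam gm gp s -> structure1 n B u a b \/ structure2 n B u a b ->
  (s b - s (a - 1)%nat) ^ 2 = 4.
Proof.
  intros (_ & _ & _ & _ & _ & Hsgn & _).
  intros [(Ha & Hab & Hbn & _ & _ & Hb & Ha') | (Ha & Hab & Hbn & _ & _ & Hb & Ha')];
    assert (Hsb := Hsgn b ltac:(lia)); assert (Hsa := Hsgn (a - 1)%nat ltac:(lia));
    replace (S (a - 1)) with a in Hsa by lia.
  - rewrite (proj2 Hsb Hb), (proj1 Hsa Ha'). ring.
  - rewrite (proj1 Hsb Hb), (proj2 Hsa Ha'). ring.
Qed.

Lemma structure_segment n B u a b :
  structure1 n B u a b \/ structure2 n B u a b ->
  (2 <= a <= b)%nat /\ (b <= n - 1)%nat /\
  (forall j, (a <= j <= b)%nat -> u j = u a) /\ - B < u a < B.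
Proof. intros [H | H]; destruct H as (? & ? & ? & ? & ? & _); auto. Qed.

Lemma structure_comparator_gap n B Cn y u lam gm gp s a b :
  KKT n B Cn y u lam gm gp s -> structure1 n B u a b \/ structure2 n B u a b ->
  let l := INR (S b - a) in
  sumR a b (fun j => (y j - u j) ^ 2) - sumR a b (fun j => (y j - / l * sumR a b y) ^ 2)
  = 4 * lam ^ 2 / l.
Proof.
  intros HK Hst l.
  destruct (structure_segment n B u a b Hst) as (Hab & Hbn & Hconst & Hua).
  assert (Hl : 0 < l) by (apply lt_0_INR; lia).
  rewrite (sumR_ext a b _ (fun j => (y j - u a) ^ 2)) by (intros j Hj; rewrite Hconst; auto).
  rewrite sq_dev_const_minus_mean by lia; fold l.
  replace (l * u a - sumR a b y) with (sumR a b (fun j => u a - y j))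
    by (rewrite sumR_minus, sumR_const; reflexivity).
  rewrite (kkt_sum_on_constant_segment n B Cn y u lam gm gp s a b) by (auto; lia).
  rewrite Rpow_mult_distr, (structure_sign_gap n B Cn y u lam gm gp s a b HK Hst).
  field; lra.
Qed.

(* FLH competes with the expert started at a, which in turn competes with c. *)
Lemma flh_ogd_regret_const n B G y init a b c :
  (3 <= n)%nat -> 1 <= B -> B <= G ->
  (forall t, (1 <= t <= n)%nat -> - G <= y t <= G) ->
  (forall j, (1 <= j <= n)%nat -> - B <= init j <= B) ->
  (1 <= a <= b)%nat -> (b < n)%nat -> - B <= c <= B ->
  sumR a b (fun j => (y j - flh_ogd B G y init j) ^ 2 - (y j - c) ^ 2)
  <= 4 * (G + B) ^ 2 * ln (INR n).
Proof.
  intros Hn HB HG Hy Hi Hab Hbn Hc.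
  assert (Hflh := flh_regret B G y init n HB HG Hy Hi a b Hab Hbn).
  assert (Hbd : forall k, (k <= b - a)%nat ->
                (y (a + k)%nat - base B y init a k) ^ 2 <= (G + B) ^ 2).
  { intros k Hk; assert (H1 := Hy (a + k)%nat ltac:(lia)).
    assert (H2 := base_bounds B y init a k ltac:(lra) (Hi a ltac:(lia))). nra. }
  assert (Hogd := ogd_regret B (G + B) c y init a Hc (b - a) Hbd).
  replace (a + (b - a))%nat with b in Hogd by lia.
  replace (S (b - a)) with (S b - a)%nat in Hogd by lia.
  assert (0 <= INR (S b - a) * (base B y init a (S b - a) - c) ^ 2)
    by (apply Rmult_le_pos; [apply pos_INR | apply pow2_ge_0]).
  rewrite <- (sumR_ext a b (fun j =>
      ((y j - flh_ogd B G y init j) ^ 2 - (y j - xb B y init a j) ^ 2)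
      + ((y j - xb B y init a j) ^ 2 - (y j - c) ^ 2))) by (intros; ring).
  rewrite sumR_plus.
  assert (Hln_l : ln (INR (S b - a)) <= ln (INR n))
    by (apply ln_le; [apply lt_0_INR | apply le_INR]; lia).
  assert (Hln_n : 1 <= ln (INR n)).
  { rewrite <- ln_exp with 1; apply ln_le; [apply exp_pos|].
    apply Rle_trans with (INR 3); [simpl; pose proof exp_le_3; lra | apply le_INR; lia]. }
  assert (0 <= (G + B) ^ 2) by apply pow2_ge_0.
  assert ((G + B) ^ 2 * ln (INR (S b - a)) <= (G + B) ^ 2 * ln (INR n))
    by (apply Rmult_le_compat_l; lra).
  assert ((G + B) ^ 2 <= (G + B) ^ 2 * ln (INR n)) by nra.
  lra.
Qed.

Theorem lemma5 (n : nat) (B G Cn : R) (y init u gm gp s : nat -> R) (lam : R)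
  (a b : nat) :
  (3 <= n)%nat -> 1 <= B -> B <= G -> 0 < Cn ->
  (forall t, (1 <= t <= n)%nat -> - G <= y t <= G) ->
  (forall j, (1 <= j <= n)%nat -> - B <= init j <= B) ->
  offline_optimal n B Cn y u ->
  KKT n B Cn y u lam gm gp s ->
  (structure1 n B u a b \/ structure2 n B u a b) ->
  - B <= / INR (b - a + 1) * sumR a b y <= B ->
  sumR a b (fun j => (y j - flh_ogd B G y init j) ^ 2 - (y j - u j) ^ 2)
    <= 10 * (B + G) ^ 2 * ln (INR n) - 4 * lam ^ 2 / INR (b - a + 1).
Proof.
  intros Hn HB HG _ Hy Hi _ HK Hst Hmean.
  destruct (structure_segment n B u a b Hst) as (Hab & Hbn & _).
  replace (b - a + 1)%nat with (S b - a)%nat in * by lia.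
  assert (Hgap := structure_comparator_gap n B Cn y u lam gm gp s a b HK Hst); cbv zeta in Hgap.
  assert (Hreg := flh_ogd_regret_const n B G y init a b _ Hn HB HG Hy Hi
                    ltac:(lia) ltac:(lia) Hmean).
  assert (0 <= (G + B) ^ 2 * ln (INR n)).
  { apply Rmult_le_pos; [apply pow2_ge_0 | rewrite <- ln_1; apply ln_le; [lra|]].
    apply (le_INR 1); lia. }
  replace ((B + G) ^ 2) with ((G + B) ^ 2) by ring.
  rewrite sumR_minus in Hreg |- *.
  lra.
Qed.
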